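(* Let $V$ be a finite set with positive element weights ($\vert A \vert$ = total weight of $A \subseteq V$), and let $\mathcal{P}, \mathcal{P}'$ be partitions of $V$ into nonempty parts. If an optimal $C_{\mathcal{P}}$-correspondence $(\mathcal{S}, \mathcal{S}')$ is not mutual, then $\vert \mathcal{S} \vert \in \{1, \vert \mathcal{P} \vert - 1\}$ or $\vert \mathcal{S}' \vert \in \{1, \vert \mathcal{P}' \vert - 1\}$.
   Context: For $\mathcal{S}$ a set of subsets of $V$, $U_{\mathcal{S}}$ is their union. A correspondence is a pair $(\mathcal{S}, \mathcal{S}')$ with $\mathcal{S} \subseteq \mathcal{P}$, $\mathcal{S}' \subseteq \mathcal{P}'$, with cost $\vert U_{\mathcal{S}} \triangle U_{\mathcal{S}'} \vert$. A $C_{\mathcal{P}}$-correspondence is one with $\mathcal{S} \notin \{\emptyset, \mathcal{P}\}$; it is optimal if its cost is minimum among all $C_{\mathcal{P}}$-correspondences. A correspondence is mutual if (1) $\vert P \cap U_{\mathcal{S}'} \vert \ge \vert P \vert/2$ for all $P \in \mathcal{S}$, (2) $\vert P \cap U_{\mathcal{S}'} \vert \le \vert P \vert/2$ for all $P \in \mathcal{P} \setminus \mathcal{S}$, (3) $\vert P' \cap U_{\mathcal{S}} \vert \ge \vert P' \vert/2$ for all $P' \in \mathcal{S}'$, and (4) $\vert P' \cap U_{\mathcal{S}} \vert \le \vert P' \vert/2$ for all $P' \in \mathcal{P}' \setminus \mathcal{S}'$. *)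

From mathcomp Require Import all_boot all_order all_algebra.
Set Implicit Arguments. Unset Strict Implicit. Unset Printing Implicit Defensive.
Import Order.TTheory GRing.Theory Num.Theory.
Local Open Scope ring_scope.

Section Defs.
Variables (R : realFieldType) (V : finType) (w : V -> R).

Definition weight (A : {set V}) : R := \sum_(x in A) w x.

Definition corr_cost (S S' : {set {set V}}) : R :=
  weight ((cover S :\: cover S') :|: (cover S' :\: cover S)).

Definition is_corr (P P' S S' : {set {set V}}) : Prop :=
  S \subset P /\ S' \subset P'.

Definition is_CP_corr (P P' S S' : {set {set V}}) : Prop :=
  is_corr P P' S S' /\ S <> set0 /\ S <> P.

Definition optimal_CP_corr (P P' S S' : {set {set V}}) : Prop :=
  is_CP_corr P P' S S' /\
  forall T T' : {set {set V}}, is_CP_corr P P' T T' ->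
    corr_cost S S' <= corr_cost T T'.

Definition mutual (P P' S S' : {set {set V}}) : Prop :=
  [/\ (forall X, X \in S -> weight X / 2 <= weight (X :&: cover S')),
      (forall X, X \in P :\: S -> weight (X :&: cover S') <= weight X / 2),
      (forall X, X \in S' -> weight X / 2 <= weight (X :&: cover S)) &
      (forall X, X \in P' :\: S' -> weight (X :&: cover S) <= weight X / 2)].
End Defs.

From mathcomp Require Import all_boot all_order all_algebra.
From mathcomp Require Import lra.
Import Order.TTheory GRing.Theory Num.Theory.
Local Open Scope ring_scope.
Set Implicit Arguments. Unset Strict Implicit.

(* Moving a single part X of P into or out of S changes the cost by
   |X \ U_S'| - |X ∩ U_S'|, since the parts of P are disjoint.  Optimality
   therefore forces each of the conditions (1)-(4) of mutuality, provided the
   moved correspondence is still a C_P-correspondence.  Removing a part from S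
   keeps S nonempty unless |S| = 1, and adding one keeps S proper unless
   |S| = |P| - 1; moving parts of P' never breaks the C_P condition. *)

Section Moves.
Variables (R : realFieldType) (V : finType) (w : V -> R).

Lemma weight_setID (Y X : {set V}) :
  weight w Y = weight w (Y :&: X) + weight w (Y :\: X).
Proof. by rewrite /weight (big_setID X). Qed.

Lemma half_weight_le_setI (X C : {set V}) :
  (weight w X / 2 <= weight w (X :&: C)) = (weight w (X :\: C) <= weight w (X :&: C)).
Proof. by rewrite (weight_setID X C); apply/idP/idP => H; lra. Qed.

Lemma setI_half_weight_le (X C : {set V}) :
  (weight w (X :&: C) <= weight w X / 2) = (weight w (X :&: C) <= weight w (X :\: C)).
Proof. by rewrite (weight_setID X C); apply/idP/idP => H; lra. Qed.

Lemma corr_costC (S S' : {set {set V}}) : corr_cost w S S' = corr_cost w S' S.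
Proof. by rewrite /corr_cost setUC. Qed.

Lemma weight_symdiffU (X A B : {set V}) : [disjoint X & A] ->
  weight w ((X :|: A) :\: B :|: B :\: (X :|: A)) =
  weight w (A :\: B :|: B :\: A) + weight w (X :\: B) - weight w (X :&: B).
Proof.
move=> dXA.
have nXA v : (v \in X) && (v \in A) = false.
  by move/setP/(_ v): (disjoint_setI0 dXA); rewrite !inE.
rewrite (weight_setID _ X) [weight w (A :\: B :|: _)](weight_setID _ X).
have -> : ((X :|: A) :\: B :|: B :\: (X :|: A)) :&: X = X :\: B.
  by apply/setP => v; rewrite !inE; move: (nXA v);
    case: (v \in X); case: (v \in A); case: (v \in B).
have -> : (A :\: B :|: B :\: A) :&: X = X :&: B.
  by apply/setP => v; rewrite !inE; move: (nXA v);
    case: (v \in X); case: (v \in A); case: (v \in B).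
have -> : ((X :|: A) :\: B :|: B :\: (X :|: A)) :\: X = (A :\: B :|: B :\: A) :\: X.
  by apply/setP => v; rewrite !inE; case: (v \in X).
lra.
Qed.

Lemma cover_setU1 (X : {set V}) (S : {set {set V}}) :
  cover (X |: S) = X :|: cover S.
Proof. by rewrite /cover bigcup_setU big_set1. Qed.

Lemma disjoint_cover_part (P S : {set {set V}}) (X : {set V}) :
  trivIset P -> S \subset P -> X \in P -> X \notin S -> [disjoint X & cover S].
Proof.
move=> tP SP XP XnS; apply: bigcup_disjoint => Y YS.
apply: (trivIsetP tP) => //; first exact: (subsetP SP).
by apply: contraNneq XnS => ->.
Qed.

Lemma corr_cost_setU1 (P S S' : {set {set V}}) (X : {set V}) :
  trivIset P -> S \subset P -> X \in P -> X \notin S ->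
  corr_cost w (X |: S) S' =
  corr_cost w S S' + weight w (X :\: cover S') - weight w (X :&: cover S').
Proof.
move=> tP SP XP XnS; rewrite /corr_cost cover_setU1 weight_symdiffU //.
exact: disjoint_cover_part tP SP XP XnS.
Qed.

End Moves.

Section PartMoves.
Variables (R : realFieldType) (V : finType) (w : V -> R).
Variables (P S S' : {set {set V}}).
Hypotheses (tP : trivIset P) (SP : S \subset P).

Lemma le_corr_cost_setU1 (X : {set V}) : X \in P -> X \notin S ->
  corr_cost w S S' <= corr_cost w (X |: S) S' ->
  weight w (X :&: cover S') <= weight w X / 2.
Proof.
move=> XP XnS; rewrite (corr_cost_setU1 w S' tP SP) // setI_half_weight_le => H; lra.
Qed.

Lemma le_corr_cost_setD1 (X : {set V}) : X \in S ->
  corr_cost w S S' <= corr_cost w (S :\ X) S' ->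
  weight w X / 2 <= weight w (X :&: cover S').
Proof.
move=> XS; have XP := subsetP SP X XS.
have SXP : S :\ X \subset P by apply: subset_trans SP; apply: subD1set.
have XnSX : X \notin S :\ X by rewrite setD11.
rewrite -{1}(setD1K XS) (corr_cost_setU1 w S' tP SXP) // half_weight_le_setI => H.
lra.
Qed.

End PartMoves.

Theorem proposition11 (R : realFieldType) (V : finType) (w : V -> R)
  (P P' S S' : {set {set V}}) :
  (forall v, 0 < w v) ->
  partition P [set: V] -> partition P' [set: V] ->
  optimal_CP_corr w P P' S S' ->
  ~ mutual w P P' S S' ->
  (#|S| = 1%N \/ #|S| = (#|P| - 1)%N) \/ (#|S'| = 1%N \/ #|S'| = (#|P'| - 1)%N).
Proof.
move=> _ /and3P [_ tP _] /and3P [_ tP' _] [[[SP SP'] [S0 SneP]] opt] nmut.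
left; have [-> | S1] := eqVneq #|S| 1%N; first by left.
have [-> | SPm1] := eqVneq #|S| (#|P| - 1)%N; first by right.
have optS' (T' : {set {set V}}) : T' \subset P' -> corr_cost w S' S <= corr_cost w T' S.
  by move=> T'P'; rewrite !(corr_costC _ _ S); apply: opt.
case: nmut; split.
- move=> X XS; apply: (le_corr_cost_setD1 tP SP XS (opt _ _ _)).
  split; first by split=> //; apply: subset_trans SP; apply: subD1set.
  split=> [SX0 | SXP].
    by move: S1; rewrite (cardsD1 X) XS SX0 cards0.
  by move: (subsetP SP X XS); rewrite -SXP setD11.
- move=> X /setDP [XP XnS]; apply: (le_corr_cost_setU1 tP SP XP XnS (opt _ _ _)).
  split; first by split=> //; rewrite subUset sub1set XP.
  split=> [/setP/(_ X) | XSP]; first by rewrite setU11 inE.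
  by move: SPm1; rewrite -XSP cardsU1 XnS /= add1n subn1 eqxx.
- move=> X XS'; apply: (le_corr_cost_setD1 tP' SP' XS' (optS' _ _)).
  by apply: subset_trans SP'; apply: subD1set.
- move=> X /setDP [XP' XnS']; apply: (le_corr_cost_setU1 tP' SP' XP' XnS' (optS' _ _)).
  by rewrite subUset sub1set XP'.
Qed.
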